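(* Let $\beta\in(0,\tfrac12)$. Then the systems $\mathcal S=\{\sin(n+\beta)t\}_{n\in\mathbb Z}$ and $\mathcal C=\{\cos(n+\beta)t\}_{n\in\mathbb Z}$ are complete in $L_2(0,2\pi)$. *)

From Stdlib Require Export Reals List.
Open Scope R_scope.

Definition lin_comb (phi : Z -> R -> R) (l : list (Z * R)) (t : R) : R :=
  fold_right (fun p acc => snd p * phi (fst p) t + acc) 0 l.

(* L2(0,2PI) is taken as the completion of C[0,2PI]
   under the L2 norm, so density of the span amounts to: every
   continuous f on [0,2PI] is approximated arbitrarily well in L2 norm
   (Riemann integral of |f - g|^2) by finite linear combinations g. *)
Definition complete_L2_0_2PI (phi : Z -> R -> R) : Prop :=
  forall f : R -> R,
    (forall t, 0 <= t <= 2 * PI -> continuity_pt f t) ->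
    forall eps : R, 0 < eps ->
      exists l : list (Z * R),
        exists pr : Riemann_integrable
                      (fun t => (f t - lin_comb phi l t) ^ 2) 0 (2 * PI),
          RiemannInt pr < eps.

Definition sin_system (beta : R) : Z -> R -> R :=
  fun n t => sin ((IZR n + beta) * t).
Definition cos_system (beta : R) : Z -> R -> R :=
  fun n t => cos ((IZR n + beta) * t).

(* The recurrence phi_n(t) cos t = (phi_(n+1)(t) + phi_(n-1)(t)) / 2 makes the span of
   either system a module over the polynomials in cos t.  The span also contains a and
   b sin t, where (a, b) = (sin beta t, cos beta t) for the sines and
   (cos beta t, sin beta t) for the cosines, and a(u) b(2pi - u) + b(u) a(2pi - u) is the
   constant sin (2 pi beta) > 0.  So for u in [0, pi] the linear system
     a(u) C + b(u) sin u Q = f(u),   a(2pi - u) C - b(2pi - u) sin u Q = f(2pi - u)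
   has determinant -sin(2 pi beta) sin u.  If f is first multiplied by the cutoff
   sin^2 t / (sin^2 t + r), the solutions C, Q are continuous on [0, pi].  They are then
   uniform limits of Bernstein polynomials in (1 - cos t) / 2.  These are invariant under
   t -> 2pi - t, so a C + b sin Q approximates the cut-off f uniformly on [0, 2pi].  What
   the cutoff removes is bounded, and small away from the zeros of sin, hence small in L2. *)

From Stdlib Require Import Reals Lra Lia.
Open Scope R_scope.

Definition bern (n : nat) (x : R) (k : nat) : R := C n k * x ^ k * (1 - x) ^ (n - k).

Definition bernstein (g : R -> R) (n : nat) (x : R) : R :=
  sum_f_R0 (fun k => g (INR k / INR n) * bern n x k) n.

Lemma bern_ge0 n x k : 0 <= x <= 1 -> 0 <= bern n x k.
Proof.
  intros Hx. unfold bern, C.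
  assert (H := INR_fact_lt_0).
  repeat apply Rmult_le_pos; try apply pow_le; try lra.
  - apply Rlt_le, H.
  - apply Rlt_le, Rinv_0_lt_compat, Rmult_lt_0_compat; apply H.
Qed.

Lemma bern_sum n x : sum_f_R0 (bern n x) n = 1.
Proof.
  unfold bern. rewrite <- binomial. replace (x + (1 - x)) with 1 by ring. apply pow1.
Qed.

Lemma binomial_absorption m i :
  (i <= m)%nat -> INR (S i) * C (S m) (S i) = INR (S m) * C m i.
Proof.
  intros Hi. unfold C. replace (S m - S i)%nat with (m - i)%nat by lia.
  rewrite !fact_simpl, !mult_INR.
  assert (H1 := INR_fact_neq_0 i). assert (H2 := INR_fact_neq_0 (m - i)).
  assert (H3 : INR (S i) <> 0) by (apply not_0_INR; lia).
  field. auto.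
Qed.

Lemma sum_binomial_absorption (G : nat -> R) m x y :
  sum_f_R0 (fun k => INR k * G k * (C (S m) k * x ^ k * y ^ (S m - k))) (S m)
  = INR (S m) * x * sum_f_R0 (fun i => G (S i) * (C m i * x ^ i * y ^ (m - i))) m.
Proof.
  rewrite decomp_sum by lia. simpl pred. rewrite scal_sum.
  replace (INR 0 * G 0%nat * _) with 0 by (simpl; ring). rewrite Rplus_0_l.
  apply sum_eq. intros k Hk.
  replace (S m - S k)%nat with (m - k)%nat by lia.
  transitivity (x * G (S k) * (INR (S k) * C (S m) (S k)) * x ^ k * y ^ (m - k));
    [simpl pow; ring|].
  rewrite binomial_absorption by exact Hk. ring.
Qed.

Lemma bern_mean n x : sum_f_R0 (fun k => INR k * bern n x k) n = INR n * x.
Proof.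
  destruct n as [|m]; [simpl; ring|].
  transitivity (sum_f_R0 (fun k => INR k * 1 * bern (S m) x k) (S m));
    [apply sum_eq; intros; ring|].
  unfold bern. rewrite sum_binomial_absorption.
  transitivity (INR (S m) * x * sum_f_R0 (bern m x) m).
  - f_equal. apply sum_eq; intros; unfold bern; ring.
  - rewrite bern_sum. ring.
Qed.

Lemma bern_factorial_moment n x :
  sum_f_R0 (fun k => INR k * (INR k - 1) * bern n x k) n = INR n * (INR n - 1) * x ^ 2.
Proof.
  destruct n as [|m]; [simpl; ring|].
  unfold bern. rewrite sum_binomial_absorption.
  transitivity (INR (S m) * x * sum_f_R0 (fun k => INR k * bern m x k) m).
  - f_equal. apply sum_eq; intros. unfold bern. rewrite S_INR. ring.
  - rewrite bern_mean, S_INR. ring.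
Qed.

Lemma bern_variance n x : (0 < n)%nat ->
  sum_f_R0 (fun k => (x - INR k / INR n) ^ 2 * bern n x k) n = x * (1 - x) / INR n.
Proof.
  intros Hn. assert (Hn' : INR n <> 0) by (apply not_0_INR; lia).
  transitivity (sum_f_R0 (fun k => bern n x k * x ^ 2
      + (INR k * bern n x k * (1 / INR n ^ 2 - 2 * x / INR n)
         + INR k * (INR k - 1) * bern n x k * (1 / INR n ^ 2))) n).
  { apply sum_eq. intros. field. exact Hn'. }
  rewrite !plus_sum, <- !scal_sum, bern_sum, bern_mean, bern_factorial_moment.
  field. exact Hn'.
Qed.

Lemma Rabs_le_near_far d z eps del M :
  0 < del -> 0 <= eps -> (Rabs z < del -> Rabs d <= eps) -> Rabs d <= M ->
  Rabs d <= eps + z ^ 2 * (M / del ^ 2).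
Proof.
  intros Hdel Heps Hnear Hfar.
  assert (Hdel2 : 0 < del ^ 2) by (apply pow_lt; lra).
  assert (HM : 0 <= M) by (eapply Rle_trans; [apply Rabs_pos | exact Hfar]).
  assert (0 <= z ^ 2 * (M / del ^ 2))
    by (apply Rmult_le_pos; [apply pow2_ge_0 | apply Rle_mult_inv_pos; lra]).
  destruct (Rlt_le_dec (Rabs z) del) as [Hlt | Hge].
  - specialize (Hnear Hlt). lra.
  - assert (del ^ 2 <= z ^ 2) by (rewrite <- (pow2_abs z); apply pow_incr; lra).
    assert (M <= z ^ 2 * (M / del ^ 2)).
    { replace M with (del ^ 2 * (M / del ^ 2)) at 1 by (field; lra).
      apply Rmult_le_compat_r; [apply Rle_mult_inv_pos|]; lra. }
    lra.
Qed.

Lemma bernstein_error g n x eps del M :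
  (0 < n)%nat -> 0 <= x <= 1 -> 0 < del -> 0 <= eps ->
  (forall k, (k <= n)%nat -> Rabs (x - INR k / INR n) < del ->
     Rabs (g x - g (INR k / INR n)) <= eps) ->
  (forall k, (k <= n)%nat -> Rabs (g x - g (INR k / INR n)) <= M) ->
  Rabs (g x - bernstein g n x) <= eps + M / (4 * INR n * del ^ 2).
Proof.
  intros Hn Hx Hdel Heps Hnear Hall.
  assert (Hn' : 0 < INR n) by (apply lt_0_INR; lia).
  assert (Hdel2 : 0 < del ^ 2) by (apply pow_lt; lra).
  assert (Hnode : forall k, (k <= n)%nat ->
    Rabs (g x - g (INR k / INR n)) <= eps + (x - INR k / INR n) ^ 2 * (M / del ^ 2))
    by (intros k Hk; apply Rabs_le_near_far; auto).
  replace (g x - bernstein g n x)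
    with (sum_f_R0 (fun k => (g x - g (INR k / INR n)) * bern n x k) n).
  2:{ unfold bernstein. rewrite <- (Rmult_1_r (g x)) at 1.
      rewrite <- (bern_sum n x), scal_sum, <- minus_sum. apply sum_eq; intros; ring. }
  eapply Rle_trans; [apply Rsum_abs|].
  eapply Rle_trans.
  { apply sum_Rle with (Bn := fun k => bern n x k * eps
        + (x - INR k / INR n) ^ 2 * bern n x k * (M / del ^ 2)).
    intros k Hk. assert (Hb := bern_ge0 n x k Hx).
    rewrite Rabs_mult, (Rabs_right (bern n x k)) by lra.
    specialize (Hnode k Hk). nra. }
  rewrite plus_sum, <- !scal_sum, bern_sum, bern_variance by exact Hn.
  assert (x * (1 - x) <= 1 / 4) by (pose proof (pow2_ge_0 (x - 1 / 2)); nra).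
  replace (M / del ^ 2 * (x * (1 - x) / INR n)) with (M / (INR n * del ^ 2) * (x * (1 - x)))
    by (field; lra).
  replace (M / (4 * INR n * del ^ 2)) with (M / (INR n * del ^ 2) * (1 / 4)) by (field; lra).
  assert (HM : 0 <= M) by (eapply Rle_trans; [apply Rabs_pos | apply (Hall 0%nat); lia]).
  assert (0 <= M / (INR n * del ^ 2)) by (apply Rle_mult_inv_pos; nra).
  nra.
Qed.

Lemma INR_div_unit k n : (0 < n)%nat -> (k <= n)%nat -> 0 <= INR k / INR n <= 1.
Proof.
  intros Hn Hk. assert (0 < INR n) by (apply lt_0_INR; lia).
  split.
  - apply Rle_mult_inv_pos; [apply pos_INR | assumption].
  - apply (Rmult_le_reg_r (INR n)); [assumption|].
    unfold Rdiv. rewrite Rmult_assoc, Rinv_l, Rmult_1_r, Rmult_1_l by lra.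
    apply le_INR, Hk.
Qed.

Theorem bernstein_approx g :
  uniform_continuity g (fun x => 0 <= x <= 1) ->
  (exists M, forall x, 0 <= x <= 1 -> Rabs (g x) <= M) ->
  forall eps, 0 < eps ->
  exists n, forall x, 0 <= x <= 1 -> Rabs (g x - bernstein g n x) <= eps.
Proof.
  intros Hunif [M HM] eps Heps.
  destruct (Hunif (mkposreal (eps / 2) ltac:(lra))) as [[del Hdel] Hclose].
  simpl in Hclose.
  assert (HM0 : 0 <= M) by (eapply Rle_trans; [apply Rabs_pos | apply (HM 0); lra]).
  assert (Hdel2 : 0 < del ^ 2) by (apply pow_lt; lra).
  destruct (archimed_cor1 (eps * del ^ 2 / (M + 1))) as [n [Hn Hn0]].
  { apply Rdiv_lt_0_compat; [apply Rmult_lt_0_compat|]; lra. }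
  exists n. intros x Hx.
  assert (Hn' : 0 < INR n) by (apply lt_0_INR; lia).
  eapply Rle_trans.
  { apply (bernstein_error g n x (eps / 2) del (2 * M)); try lra; try assumption.
    - intros k Hk Hxk.
      apply Rlt_le, Hclose; [assumption | apply INR_div_unit; assumption | assumption].
    - intros k Hk. unfold Rminus. eapply Rle_trans; [apply Rabs_triang|].
      rewrite Rabs_Ropp.
      assert (Rabs (g x) <= M) by (apply HM; assumption).
      assert (Rabs (g (INR k / INR n)) <= M) by (apply HM, INR_div_unit; assumption).
      lra. }
  assert (Hw : (M + 1) * / INR n <= eps * del ^ 2).
  { apply Rlt_le.
    replace (eps * del ^ 2) with ((M + 1) * (eps * del ^ 2 / (M + 1))) by (field; lra).
    apply Rmult_lt_compat_l; lra. }
  assert (2 * M / (4 * INR n * del ^ 2) <= eps / 2).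
  { replace (2 * M / (4 * INR n * del ^ 2)) with (M * / INR n / (2 * del ^ 2)) by (field; lra).
    replace (eps / 2) with (eps * del ^ 2 / (2 * del ^ 2)) by (field; lra).
    apply Rmult_le_compat_r; [apply Rlt_le, Rinv_0_lt_compat; lra|].
    pose proof (Rinv_0_lt_compat _ Hn'). nra. }
  lra.
Qed.

Lemma sin_ge_sin_margin a u : 0 < a <= PI / 2 -> a <= u <= PI - a -> sin a <= sin u.
Proof.
  intros Ha Hu. assert (HP := PI_RGT_0).
  destruct (Rle_dec u (PI / 2)).
  - apply sin_incr_1; lra.
  - rewrite <- (sin_PI_x u). apply sin_incr_1; lra.
Qed.

Lemma cos_sub_cos_lower t s e :
  0 < e <= PI -> 0 <= t -> t + e <= s <= PI -> 2 * sin (e / 2) ^ 2 <= cos t - cos s.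
Proof.
  intros He Ht Hs. assert (HP := PI_RGT_0).
  assert (cos s <= cos (t + e)).
  { destruct (Req_dec s (t + e)) as [->|Hne]; [lra|].
    apply Rlt_le, cos_decreasing_1; lra. }
  assert (cos t - cos (t + e) = 2 * sin (e / 2) * sin (t + e / 2)).
  { rewrite form2. replace ((t - (t + e)) / 2) with (- (e / 2)) by field.
    replace ((t + (t + e)) / 2) with (t + e / 2) by field. rewrite sin_neg. ring. }
  assert (sin (e / 2) <= sin (t + e / 2)) by (apply sin_ge_sin_margin; lra).
  assert (0 < sin (e / 2)) by (apply sin_gt_0; lra).
  nra.
Qed.

Lemma uniform_continuity_acos : uniform_continuity acos (fun x => -1 <= x <= 1).
Proof.
  intros [eta Heta]. simpl. assert (HP := PI_RGT_0).
  set (e := Rmin eta PI).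
  assert (He : 0 < e <= PI) by (unfold e; split; [apply Rmin_glb_lt | apply Rmin_r]; lra).
  assert (Heta' : e <= eta) by apply Rmin_l.
  assert (Hs : 0 < sin (e / 2)) by (apply sin_gt_0; lra).
  exists (mkposreal (2 * sin (e / 2) ^ 2) ltac:(nra)). simpl.
  assert (Hgap : forall x y, -1 <= x <= 1 -> -1 <= y <= 1 -> acos x + e <= acos y ->
            2 * sin (e / 2) ^ 2 <= x - y).
  { intros x y Hx Hy Hxy.
    pose proof (cos_sub_cos_lower (acos x) (acos y) e He (proj1 (acos_bound x))
                  (conj Hxy (proj2 (acos_bound y)))) as Hc.
    rewrite !cos_acos in Hc by assumption. exact Hc. }
  intros x y Hx Hy Hxy. apply Rabs_def2 in Hxy.
  destruct (Rlt_le_dec (Rabs (acos x - acos y)) eta) as [Hok | Hfar]; [exact Hok | exfalso].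
  destruct (Rle_dec (acos x) (acos y)).
  - rewrite Rabs_left1 in Hfar by lra. specialize (Hgap x y Hx Hy ltac:(lra)). lra.
  - rewrite Rabs_right in Hfar by lra. specialize (Hgap y x Hy Hx ltac:(lra)). lra.
Qed.

Lemma cos_poly_approx h :
  (forall t, 0 <= t <= PI -> continuity_pt h t) ->
  forall eps, 0 < eps -> exists n, forall t, 0 <= t <= PI ->
    Rabs (h t - bernstein (fun x => h (acos (1 - 2 * x))) n ((1 - cos t) / 2)) <= eps.
Proof.
  intros Hh eps Heps. assert (HP := PI_RGT_0).
  set (g := fun x => h (acos (1 - 2 * x))).
  assert (Hg : uniform_continuity g (fun x => 0 <= x <= 1)).
  { intros e. destruct (Heine h _ (compact_P3 0 PI) Hh e) as [d1 Hd1].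
    destruct (uniform_continuity_acos d1) as [[d2 Hd2] Hacos]. simpl in Hacos.
    exists (mkposreal (d2 / 2) ltac:(lra)). simpl. intros x y Hx Hy Hxy. unfold g.
    apply Hd1; try apply acos_bound. apply Hacos; try lra.
    replace (1 - 2 * x - (1 - 2 * y)) with (-2 * (x - y)) by ring.
    rewrite Rabs_mult, Rabs_left by lra. lra. }
  assert (Hbound : exists M, forall x, 0 <= x <= 1 -> Rabs (g x) <= M).
  { destruct (continuity_ab_maj (fun t => Rabs (h t)) 0 PI) as [Mx [HMx _]]; [lra| |].
    - intros c Hc. apply (continuity_pt_comp h Rabs); [apply Hh, Hc | apply Rcontinuity_abs].
    - exists (Rabs (h Mx)). intros x Hx. apply HMx, acos_bound. }
  destruct (bernstein_approx g Hg Hbound eps Heps) as [n Hn].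
  exists n. intros t Ht.
  assert (Hx : 0 <= (1 - cos t) / 2 <= 1) by (pose proof (COS_bound t); lra).
  specialize (Hn _ Hx). unfold g at 1 in Hn.
  replace (1 - 2 * ((1 - cos t) / 2)) with (cos t) in Hn by field.
  rewrite acos_cos in Hn by exact Ht. exact Hn.
Qed.

Definition in_span (phi : Z -> R -> R) (g : R -> R) : Prop :=
  exists l, forall t, g t = lin_comb phi l t.

Definition span_multiplier (phi : Z -> R -> R) (m : R -> R) : Prop :=
  forall s, in_span phi s -> in_span phi (fun t => m t * s t).

Lemma lin_comb_cons phi p l t :
  lin_comb phi (p :: l) t = snd p * phi (fst p) t + lin_comb phi l t.
Proof. reflexivity. Qed.

Lemma lin_comb_app phi l1 l2 t :
  lin_comb phi (l1 ++ l2) t = lin_comb phi l1 t + lin_comb phi l2 t.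
Proof.
  induction l1 as [|p l1 IH]; cbn [app]; [simpl; ring|].
  rewrite !lin_comb_cons, IH. ring.
Qed.

Lemma lin_comb_scal phi c l t :
  lin_comb phi (map (fun p => (fst p, c * snd p)) l) t = c * lin_comb phi l t.
Proof.
  induction l as [|p l IH]; cbn [map]; [simpl; ring|].
  rewrite !lin_comb_cons, IH. simpl. ring.
Qed.

Lemma lin_comb_continuity phi l t :
  (forall n, continuity_pt (phi n) t) -> continuity_pt (lin_comb phi l) t.
Proof.
  intros Hphi. induction l as [|p l IH].
  - apply continuity_pt_const. intros ? ?. reflexivity.
  - apply continuity_pt_plus; [|exact IH].
    apply continuity_pt_mult; [apply continuity_pt_const; intros ? ?; reflexivity | apply Hphi].
Qed.

Lemma in_span_ext phi g1 g2 :
  in_span phi g1 -> (forall t, g1 t = g2 t) -> in_span phi g2.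
Proof. intros [l Hl] Heq. exists l. intros t. rewrite <- Heq. apply Hl. Qed.

Lemma in_span_add phi g1 g2 :
  in_span phi g1 -> in_span phi g2 -> in_span phi (fun t => g1 t + g2 t).
Proof.
  intros [l1 H1] [l2 H2]. exists (l1 ++ l2). intros t. rewrite lin_comb_app, H1, H2. reflexivity.
Qed.

Section Multipliers.

Variable phi : Z -> R -> R.

Lemma multiplier_ext m1 m2 :
  span_multiplier phi m1 -> (forall t, m1 t = m2 t) -> span_multiplier phi m2.
Proof.
  intros H1 Heq s Hs. apply (in_span_ext _ _ _ (H1 s Hs)). intros t. rewrite Heq. reflexivity.
Qed.

Lemma multiplier_const c : span_multiplier phi (fun _ => c).
Proof.
  intros s [l Hl]. exists (map (fun p => (fst p, c * snd p)) l). intros t.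
  rewrite lin_comb_scal, Hl. reflexivity.
Qed.

Lemma multiplier_plus m1 m2 :
  span_multiplier phi m1 -> span_multiplier phi m2 ->
  span_multiplier phi (fun t => m1 t + m2 t).
Proof.
  intros H1 H2 s Hs. apply (in_span_ext _ _ _ (in_span_add _ _ _ (H1 s Hs) (H2 s Hs))).
  intros t. ring.
Qed.

Lemma multiplier_mult m1 m2 :
  span_multiplier phi m1 -> span_multiplier phi m2 ->
  span_multiplier phi (fun t => m1 t * m2 t).
Proof.
  intros H1 H2 s Hs. apply (in_span_ext _ _ _ (H1 _ (H2 s Hs))). intros t. ring.
Qed.

Lemma multiplier_pow m k : span_multiplier phi m -> span_multiplier phi (fun t => m t ^ k).
Proof.
  intros Hm. induction k as [|k IH]; cbn [pow].
  - apply multiplier_const.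
  - apply multiplier_mult; assumption.
Qed.

Lemma multiplier_sum (F : nat -> R -> R) N :
  (forall k, span_multiplier phi (F k)) ->
  span_multiplier phi (fun t => sum_f_R0 (fun k => F k t) N).
Proof.
  intros HF. induction N as [|N IH]; cbn [sum_f_R0]; [apply HF | apply multiplier_plus; auto].
Qed.

Hypothesis phi_recurrence :
  forall n t, phi n t * cos t = (phi (n + 1)%Z t + phi (n - 1)%Z t) / 2.

Lemma multiplier_cos : span_multiplier phi cos.
Proof.
  intros s [l Hl].
  exists (flat_map (fun p => ((fst p + 1)%Z, snd p / 2) :: ((fst p - 1)%Z, snd p / 2) :: nil) l).
  intros t. rewrite Hl. clear Hl.
  induction l as [|p l IH]; cbn [flat_map app]; [simpl; ring|].
  rewrite !lin_comb_cons, <- IH. cbn [fst snd].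
  transitivity (snd p * (phi (fst p) t * cos t) + cos t * lin_comb phi l t); [ring|].
  rewrite phi_recurrence. field.
Qed.

Lemma multiplier_bernstein_cos g n :
  span_multiplier phi (fun t => bernstein g n ((1 - cos t) / 2)).
Proof.
  assert (Hx : span_multiplier phi (fun t => (1 - cos t) / 2)).
  { apply (multiplier_ext (fun t => 1 / 2 + -1 / 2 * cos t));
      [apply multiplier_plus, multiplier_mult; auto using multiplier_const, multiplier_cos|].
    intros t. field. }
  assert (H1x : span_multiplier phi (fun t => 1 - (1 - cos t) / 2)).
  { apply multiplier_plus; [apply multiplier_const|].
    apply (multiplier_ext (fun t => -1 * ((1 - cos t) / 2)));
      [apply multiplier_mult; auto using multiplier_const | intros t; ring]. }
  unfold bernstein, bern. apply multiplier_sum. intros k.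
  apply multiplier_mult; [apply multiplier_const|].
  apply multiplier_mult; [apply multiplier_mult|]; auto using multiplier_const, multiplier_pow.
Qed.

End Multipliers.

Lemma RiemannInt_le_const h a b K (pr : Riemann_integrable h a b) :
  a <= b -> (forall x, a <= x <= b -> h x <= K) -> RiemannInt pr <= K * (b - a).
Proof.
  intros Hab HK. rewrite <- (RiemannInt_P15 (RiemannInt_P14 a b K)).
  apply RiemannInt_P19; [exact Hab|]. intros x Hx. apply HK. lra.
Qed.

Lemma RiemannInt_le_margin h a c del K gam (pr : Riemann_integrable h a c) :
  0 <= del -> 2 * del <= c - a -> 0 <= gam ->
  (forall x, a <= x <= c -> h x <= K) ->
  (forall x, a + del <= x <= c - del -> h x <= gam) ->
  RiemannInt pr <= 2 * del * K + (c - a) * gam.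
Proof.
  intros Hdel Hac Hgam HK Hmid.
  assert (pr1 : Riemann_integrable h a (a + del)) by (apply (RiemannInt_P22 pr); lra).
  assert (pr23 : Riemann_integrable h (a + del) c) by (apply (RiemannInt_P23 pr); lra).
  assert (pr2 : Riemann_integrable h (a + del) (c - del)) by (apply (RiemannInt_P22 pr23); lra).
  assert (pr3 : Riemann_integrable h (c - del) c) by (apply (RiemannInt_P23 pr23); lra).
  rewrite <- (RiemannInt_P26 pr1 pr23 pr), <- (RiemannInt_P26 pr2 pr3 pr23).
  pose proof (RiemannInt_le_const h _ _ K pr1 ltac:(lra) ltac:(intros; apply HK; lra)).
  pose proof (RiemannInt_le_const h _ _ gam pr2 ltac:(lra) Hmid).
  pose proof (RiemannInt_le_const h _ _ K pr3 ltac:(lra) ltac:(intros; apply HK; lra)).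
  nra.
Qed.

Lemma pow2_le_of_Rabs_le y c : Rabs y <= c -> y ^ 2 <= c ^ 2.
Proof. intros H. rewrite <- pow2_abs. apply pow_incr. split; [apply Rabs_pos | exact H]. Qed.

Lemma Rabs_comb_le x y u v e :
  Rabs x <= 1 -> Rabs y <= 1 -> Rabs u <= e -> Rabs v <= e -> Rabs (x * u + y * v) <= 2 * e.
Proof.
  intros Hx Hy Hu Hv. eapply Rle_trans; [apply Rabs_triang|]. rewrite !Rabs_mult.
  pose proof (Rabs_pos x). pose proof (Rabs_pos y).
  pose proof (Rabs_pos u). pose proof (Rabs_pos v). nra.
Qed.

Lemma cos_2PI_sub t : cos (2 * PI - t) = cos t.
Proof. rewrite cos_minus, cos_2PI, sin_2PI. ring. Qed.

Lemma sin_2PI_sub t : sin (2 * PI - t) = - sin t.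
Proof. rewrite sin_minus, cos_2PI, sin_2PI. ring. Qed.

Lemma continuity_pt_reflect g u :
  continuity_pt g (2 * PI - u) -> continuity_pt (fun t => g (2 * PI - t)) u.
Proof. intros Hg. apply (continuity_pt_comp (fun t => 2 * PI - t) g); [reg | exact Hg]. Qed.

Definition cutoff (r t : R) : R := sin t ^ 2 / (sin t ^ 2 + r).

Lemma cutoff_reflect r t : cutoff r (2 * PI - t) = cutoff r t.
Proof. unfold cutoff. rewrite sin_2PI_sub. f_equal; ring. Qed.

Lemma cutoff_continuity r t : 0 < r -> continuity_pt (cutoff r) t.
Proof.
  intros Hr. unfold cutoff. pose proof (pow2_ge_0 (sin t)).
  apply continuity_pt_div; [reg | reg | lra].
Qed.

Lemma one_sub_cutoff r t : 0 < r ->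
  1 - cutoff r t = r / (sin t ^ 2 + r) /\ 0 <= r / (sin t ^ 2 + r) <= 1.
Proof.
  intros Hr. unfold cutoff. pose proof (pow2_ge_0 (sin t)).
  split; [field; lra|]. split.
  - apply Rle_mult_inv_pos; lra.
  - apply (Rmult_le_reg_r (sin t ^ 2 + r)); [lra|].
    unfold Rdiv. rewrite Rmult_assoc, Rinv_l, Rmult_1_r by lra. lra.
Qed.

Lemma cutoff_residual r t x y M ep : 0 < r -> Rabs x <= M ->
  Rabs (x * cutoff r t - y) <= ep -> Rabs (x - y) <= M * (r / (sin t ^ 2 + r)) + ep.
Proof.
  intros Hr HM Hy. destruct (one_sub_cutoff r t Hr) as [Hw Hw01].
  replace (x - y) with (x * (1 - cutoff r t) + (x * cutoff r t - y)) by ring.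
  rewrite Hw. eapply Rle_trans; [apply Rabs_triang|].
  apply Rplus_le_compat; [|exact Hy].
  rewrite Rabs_mult, (Rabs_right (r / _)) by lra.
  apply Rmult_le_compat_r; lra.
Qed.

Lemma RiemannInt_le_off_sin_zeros h a0 K gam (pr : Riemann_integrable h 0 (2 * PI)) :
  0 < a0 <= PI / 2 -> 0 <= gam ->
  (forall t, 0 <= t <= 2 * PI -> h t <= K) ->
  (forall t, 0 <= t <= 2 * PI -> sin a0 <= Rabs (sin t) -> h t <= gam) ->
  RiemannInt pr <= 4 * a0 * K + 2 * PI * gam.
Proof.
  intros Ha0 Hgam HK Hoff. assert (HP := PI_RGT_0).
  assert (pr_lo : Riemann_integrable h 0 PI) by (apply (RiemannInt_P22 pr); lra).
  assert (pr_hi : Riemann_integrable h PI (2 * PI)) by (apply (RiemannInt_P23 pr); lra).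
  rewrite <- (RiemannInt_P26 pr_lo pr_hi pr).
  assert (Hlo : RiemannInt pr_lo <= 2 * a0 * K + (PI - 0) * gam).
  { apply RiemannInt_le_margin; try lra.
    - intros x Hx. apply HK. lra.
    - intros x Hx. apply Hoff; [lra|].
      eapply Rle_trans; [apply (sin_ge_sin_margin a0 x); lra | apply RRle_abs]. }
  assert (Hhi : RiemannInt pr_hi <= 2 * a0 * K + (2 * PI - PI) * gam).
  { apply RiemannInt_le_margin; try lra.
    - intros x Hx. apply HK. lra.
    - intros x Hx. apply Hoff; [lra|].
      replace (sin x) with (- sin (x - PI)) by (rewrite sin_minus, sin_PI, cos_PI; ring).
      rewrite Rabs_Ropp.
      eapply Rle_trans; [apply (sin_ge_sin_margin a0 (x - PI)); lra | apply RRle_abs]. }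
  lra.
Qed.

Section ReflectionPair.

Variable phi : Z -> R -> R.
Hypothesis phi_recurrence :
  forall n t, phi n t * cos t = (phi (n + 1)%Z t + phi (n - 1)%Z t) / 2.
Hypothesis phi_continuous : forall n t, continuity_pt (phi n) t.

Variables (a b : R -> R) (D : R).
Hypothesis a_in_span : in_span phi a.
Hypothesis b_sin_in_span : in_span phi (fun t => b t * sin t).
Hypothesis a_continuous : forall t, continuity_pt a t.
Hypothesis b_continuous : forall t, continuity_pt b t.
Hypothesis a_bounded : forall t, Rabs (a t) <= 1.
Hypothesis b_bounded : forall t, Rabs (b t) <= 1.
Hypothesis D_pos : 0 < D.
Hypothesis reflection_det : forall u, a u * b (2 * PI - u) + b u * a (2 * PI - u) = D.

Section Cutoff.

Variable f : R -> R.
Hypothesis f_continuous : forall t, 0 <= t <= 2 * PI -> continuity_pt f t.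
Variable r : R.
Hypothesis r_pos : 0 < r.

(* The sin u of the determinant cancels against the sin^2 u of the cutoff. *)
Let coef_a u := cutoff r u * (b (2 * PI - u) * f u + b u * f (2 * PI - u)) / D.
Let coef_b u :=
  sin u * (a (2 * PI - u) * f u - a u * f (2 * PI - u)) / (D * (sin u ^ 2 + r)).

Lemma coef_solve_lower u : a u * coef_a u + b u * sin u * coef_b u = f u * cutoff r u.
Proof.
  unfold coef_a, coef_b, cutoff. pose proof (pow2_ge_0 (sin u)).
  transitivity (sin u ^ 2 / (sin u ^ 2 + r) * f u
                * (a u * b (2 * PI - u) + b u * a (2 * PI - u)) / D);
    [field; lra|].
  rewrite reflection_det. field. lra.
Qed.

Lemma coef_solve_upper u :
  a (2 * PI - u) * coef_a u - b (2 * PI - u) * sin u * coef_b u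
  = f (2 * PI - u) * cutoff r u.
Proof.
  unfold coef_a, coef_b, cutoff. pose proof (pow2_ge_0 (sin u)).
  transitivity (sin u ^ 2 / (sin u ^ 2 + r) * f (2 * PI - u)
                * (a u * b (2 * PI - u) + b u * a (2 * PI - u)) / D);
    [field; lra|].
  rewrite reflection_det. field. lra.
Qed.

Lemma coef_a_continuous u : 0 <= u <= PI -> continuity_pt coef_a u.
Proof.
  intros Hu. assert (HP := PI_RGT_0). unfold coef_a.
  apply continuity_pt_div; [| reg | lra].
  apply continuity_pt_mult; [apply cutoff_continuity, r_pos|].
  apply continuity_pt_plus; apply continuity_pt_mult.
  - apply continuity_pt_reflect, b_continuous.
  - apply f_continuous. lra.
  - apply b_continuous.
  - apply continuity_pt_reflect, f_continuous. lra.
Qed.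

Lemma coef_b_continuous u : 0 <= u <= PI -> continuity_pt coef_b u.
Proof.
  intros Hu. assert (HP := PI_RGT_0). unfold coef_b.
  pose proof (pow2_ge_0 (sin u)).
  apply continuity_pt_div; [| reg | apply Rmult_integral_contrapositive; split; lra].
  apply continuity_pt_mult; [reg|].
  apply continuity_pt_minus; apply continuity_pt_mult.
  - apply continuity_pt_reflect, a_continuous.
  - apply f_continuous. lra.
  - apply a_continuous.
  - apply continuity_pt_reflect, f_continuous. lra.
Qed.

Lemma cutoff_approx ep : 0 < ep ->
  exists l, forall t, 0 <= t <= 2 * PI -> Rabs (f t * cutoff r t - lin_comb phi l t) <= ep.
Proof.
  intros Hep. assert (HP := PI_RGT_0).
  destruct (cos_poly_approx coef_a coef_a_continuous (ep / 2)) as [na Ha]; [lra|].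
  destruct (cos_poly_approx coef_b coef_b_continuous (ep / 2)) as [nb Hb]; [lra|].
  set (P := fun t => bernstein (fun x => coef_a (acos (1 - 2 * x))) na ((1 - cos t) / 2)).
  set (Q := fun t => bernstein (fun x => coef_b (acos (1 - 2 * x))) nb ((1 - cos t) / 2)).
  change (forall t, 0 <= t <= PI -> Rabs (coef_a t - P t) <= ep / 2) in Ha.
  change (forall t, 0 <= t <= PI -> Rabs (coef_b t - Q t) <= ep / 2) in Hb.
  destruct (in_span_add phi _ _
              (multiplier_bernstein_cos phi phi_recurrence (fun x => coef_a (acos (1 - 2 * x))) na
                 a a_in_span)
              (multiplier_bernstein_cos phi phi_recurrence (fun x => coef_b (acos (1 - 2 * x))) nb
                 _ b_sin_in_span)) as [l Hl].
  exists l. intros t Ht. rewrite <- Hl.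
  change (Rabs (f t * cutoff r t - (P t * a t + Q t * (b t * sin t))) <= ep).
  assert (Hbsin : forall u v, Rabs (b u * sin v) <= 1).
  { intros u v. rewrite Rabs_mult, <- (Rmult_1_l 1).
    apply Rmult_le_compat; auto using Rabs_pos. apply Rabs_le, SIN_bound. }
  replace ep with (2 * (ep / 2)) by field.
  destruct (Rle_dec t PI) as [Hlow | Hhigh].
  - rewrite <- coef_solve_lower.
    replace (a t * coef_a t + b t * sin t * coef_b t - (P t * a t + Q t * (b t * sin t)))
      with (a t * (coef_a t - P t) + b t * sin t * (coef_b t - Q t)) by ring.
    apply Rabs_comb_le; [apply a_bounded | apply Hbsin | apply Ha | apply Hb]; lra.
  - set (u := 2 * PI - t). replace t with (2 * PI - u) by (unfold u; ring).
    assert (Hu : 0 <= u <= PI) by (unfold u; lra).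
    assert (HPu : P (2 * PI - u) = P u) by (unfold P; rewrite cos_2PI_sub; reflexivity).
    assert (HQu : Q (2 * PI - u) = Q u) by (unfold Q; rewrite cos_2PI_sub; reflexivity).
    rewrite cutoff_reflect, <- coef_solve_upper, HPu, HQu, sin_2PI_sub.
    replace (a (2 * PI - u) * coef_a u - b (2 * PI - u) * sin u * coef_b u
             - (P u * a (2 * PI - u) + Q u * (b (2 * PI - u) * - sin u)))
      with (a (2 * PI - u) * (coef_a u - P u)
            + - (b (2 * PI - u) * sin u) * (coef_b u - Q u)) by ring.
    apply Rabs_comb_le;
      [apply a_bounded | rewrite Rabs_Ropp; apply Hbsin | apply Ha, Hu | apply Hb, Hu].
Qed.

End Cutoff.

Theorem complete_of_reflection_pair : complete_L2_0_2PI phi.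
Proof.
  intros f Hf eps Heps. assert (HP := PI_RGT_0).
  destruct (continuity_ab_maj (fun t => Rabs (f t)) 0 (2 * PI)) as [Mx [HMx _]]; [lra| |].
  { intros c Hc. apply (continuity_pt_comp f Rabs); [apply Hf, Hc | apply Rcontinuity_abs]. }
  set (M := Rabs (f Mx)). assert (HM : 0 <= M) by apply Rabs_pos.
  set (K := (M + 1) ^ 2). assert (HK : 0 < K) by (unfold K; nra).
  set (a0 := Rmin (PI / 2) (eps / (8 * K))).
  assert (Ha0 : 0 < a0 <= PI / 2 /\ a0 <= eps / (8 * K)).
  { unfold a0. repeat split; [apply Rmin_glb_lt | apply Rmin_l | apply Rmin_r].
    - lra.
    - apply Rdiv_lt_0_compat; lra. }
  set (gam := Rmin 1 (eps / (8 * PI))).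
  assert (Hgam : 0 < gam <= 1 /\ gam <= eps / (8 * PI)).
  { unfold gam. repeat split; [apply Rmin_glb_lt | apply Rmin_l | apply Rmin_r].
    - lra.
    - apply Rdiv_lt_0_compat; lra. }
  assert (Hs0 : 0 < sin a0) by (apply sin_gt_0; lra).
  set (r := gam * sin a0 ^ 2 / (2 * (M + 1))).
  assert (Hr : 0 < r).
  { unfold r. apply Rdiv_lt_0_compat; [apply Rmult_lt_0_compat; [|apply pow_lt] |]; lra. }
  destruct (cutoff_approx f Hf r Hr (gam / 2)) as [l Hl]; [lra|].
  set (h := fun t => (f t - lin_comb phi l t) ^ 2).
  assert (Hdist : forall t, 0 <= t <= 2 * PI ->
            Rabs (f t - lin_comb phi l t) <= M * (r / (sin t ^ 2 + r)) + gam / 2)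
    by (intros t Ht; apply cutoff_residual; auto).
  assert (Hh_all : forall t, 0 <= t <= 2 * PI -> h t <= K).
  { intros t Ht. apply pow2_le_of_Rabs_le.
    specialize (Hdist t Ht). destruct (one_sub_cutoff r t Hr) as [_ Hw01]. nra. }
  assert (Hh_off : forall t, 0 <= t <= 2 * PI -> sin a0 <= Rabs (sin t) -> h t <= gam ^ 2).
  { intros t Ht Hsin. apply pow2_le_of_Rabs_le.
    assert (sin a0 ^ 2 <= sin t ^ 2)
      by (rewrite <- (pow2_abs (sin t)); apply pow_incr; lra).
    assert (r / (sin t ^ 2 + r) <= r / sin a0 ^ 2).
    { apply Rmult_le_compat_l; [lra|]. apply Rinv_le_contravar; [apply pow_lt|]; lra. }
    assert (M * (r / sin a0 ^ 2) <= gam / 2).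
    { replace (M * (r / sin a0 ^ 2)) with (gam / 2 - gam / (2 * (M + 1)))
        by (unfold r; field; lra).
      assert (0 <= gam / (2 * (M + 1))) by (apply Rle_mult_inv_pos; lra). lra. }
    specialize (Hdist t Ht). nra. }
  assert (pr : Riemann_integrable h 0 (2 * PI)).
  { apply continuity_implies_RiemannInt; [lra|]. intros t Ht. unfold h.
    apply (continuity_pt_comp (fun t => f t - lin_comb phi l t) (fun y => y ^ 2)); [|reg].
    apply continuity_pt_minus; [apply Hf, Ht | apply lin_comb_continuity; auto]. }
  exists l, pr. change (@RiemannInt h 0 (2 * PI) pr < eps).
  eapply Rle_lt_trans; [apply (RiemannInt_le_off_sin_zeros h a0 K (gam ^ 2)); auto; nra|].
  assert (a0 * K <= eps / 8)
    by (replace (eps / 8) with (eps / (8 * K) * K) by (field; lra); nra).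
  assert (PI * gam ^ 2 <= eps / 8).
  { assert (gam ^ 2 <= gam) by nra.
    replace (eps / 8) with (eps / (8 * PI) * PI) by (field; lra). nra. }
  lra.
Qed.

End ReflectionPair.

Lemma sin_system_recurrence beta n t :
  sin_system beta n t * cos t
  = (sin_system beta (n + 1)%Z t + sin_system beta (n - 1)%Z t) / 2.
Proof.
  unfold sin_system. rewrite plus_IZR, minus_IZR.
  replace ((IZR n + 1 + beta) * t) with ((IZR n + beta) * t + t) by ring.
  replace ((IZR n - 1 + beta) * t) with ((IZR n + beta) * t - t) by ring.
  rewrite sin_plus, sin_minus. field.
Qed.

Lemma cos_system_recurrence beta n t :
  cos_system beta n t * cos t
  = (cos_system beta (n + 1)%Z t + cos_system beta (n - 1)%Z t) / 2.
Proof.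
  unfold cos_system. rewrite plus_IZR, minus_IZR.
  replace ((IZR n + 1 + beta) * t) with ((IZR n + beta) * t + t) by ring.
  replace ((IZR n - 1 + beta) * t) with ((IZR n + beta) * t - t) by ring.
  rewrite cos_plus, cos_minus. field.
Qed.

Lemma sin_system_span beta :
  in_span (sin_system beta) (fun t => sin (beta * t)) /\
  in_span (sin_system beta) (fun t => cos (beta * t) * sin t).
Proof.
  split.
  - exists ((0%Z, 1) :: nil). intros t. unfold lin_comb, sin_system. simpl.
    rewrite Rplus_0_l. ring.
  - exists ((1%Z, 1 / 2) :: ((-1)%Z, - 1 / 2) :: nil). intros t.
    unfold lin_comb, sin_system. simpl.
    replace ((1 + beta) * t) with (beta * t + t) by ring.
    replace ((-1 + beta) * t) with (beta * t - t) by ring.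
    rewrite sin_plus, sin_minus. field.
Qed.

Lemma cos_system_span beta :
  in_span (cos_system beta) (fun t => cos (beta * t)) /\
  in_span (cos_system beta) (fun t => sin (beta * t) * sin t).
Proof.
  split.
  - exists ((0%Z, 1) :: nil). intros t. unfold lin_comb, cos_system. simpl.
    rewrite Rplus_0_l. ring.
  - exists (((-1)%Z, 1 / 2) :: (1%Z, - 1 / 2) :: nil). intros t.
    unfold lin_comb, cos_system. simpl.
    replace ((1 + beta) * t) with (beta * t + t) by ring.
    replace ((-1 + beta) * t) with (beta * t - t) by ring.
    rewrite cos_plus, cos_minus. field.
Qed.

Lemma sin_system_continuity beta n t : continuity_pt (sin_system beta n) t.
Proof. unfold sin_system. reg. Qed.

Lemma cos_system_continuity beta n t : continuity_pt (cos_system beta n) t.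
Proof. unfold cos_system. reg. Qed.

Theorem lemma3 (beta : R) (hb : 0 < beta < 1 / 2) :
  complete_L2_0_2PI (sin_system beta) /\ complete_L2_0_2PI (cos_system beta).
Proof.
  (* The only use of beta < 1/2. *)
  assert (HD : 0 < sin (2 * PI * beta)) by (pose proof PI_RGT_0; apply sin_gt_0; nra).
  destruct (sin_system_span beta) as [Hsa Hsb].
  destruct (cos_system_span beta) as [Hca Hcb].
  split.
  - apply (complete_of_reflection_pair _ (sin_system_recurrence beta)
             (sin_system_continuity beta) _ _ (sin (2 * PI * beta)) Hsa Hsb).
    + intros t. reg.
    + intros t. reg.
    + intros t. apply Rabs_le, SIN_bound.
    + intros t. apply Rabs_le, COS_bound.
    + exact HD.
    + intros u. rewrite <- sin_plus. f_equal. ring.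
  - apply (complete_of_reflection_pair _ (cos_system_recurrence beta)
             (cos_system_continuity beta) _ _ (sin (2 * PI * beta)) Hca Hcb).
    + intros t. reg.
    + intros t. reg.
    + intros t. apply Rabs_le, COS_bound.
    + intros t. apply Rabs_le, SIN_bound.
    + exact HD.
    + intros u. rewrite Rplus_comm, <- sin_plus. f_equal. ring.
Qed.
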